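(* Let $\mathcal{X}$ be a finite set and let $\mu,\nu$ be probability distributions on $\mathcal{X}$ with $\mathrm{D}_\infty(\mu\|\nu)<\infty$. Let $\widetilde D\sim\mu^n$ and $\widehat D\sim\nu^m$ be datasets of $n$ and $m$ independent samples from $\mu$ and $\nu$ respectively, and let $\widehat{\mathcal{X}}=\{x\in\mathcal{X}: x\text{ appears in }\widehat D\}$ be the support of $\widehat D$. Let $Q$ be a finite set of statistical queries $q:\mathcal{X}\to[0,1]$ and let $\alpha,\beta>0$. If \[n\ge \frac{8}{\alpha^2}\log\left(\frac{4|Q|}{\beta}\right)\quad\text{and}\quad m\ge\left(\frac{32}{\alpha^2}e^{\mathrm{D}_2(\mu\|\nu)}+\frac{8}{3\alpha}e^{\mathrm{D}_\infty(\mu\|\nu)}\right)\log\left(\frac{4|Q|+4}{\beta}\right),\] then $\Pr\left[f_{\widetilde D,Q}(\widehat{\mathcal{X}})\le\alpha\right]\ge 1-\beta$.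
   Context: For a dataset $D=(x_1,\dots,x_k)\in\mathcal{X}^k$ and a query $q:\mathcal{X}\to[0,1]$, $q(D)=\frac1k\sum_{i}q(x_i)$. For a nonempty $S\subseteq\mathcal{X}$, the best mixture error is $f_{D,Q}(S)=\min_{\mu'\in\Delta(S)}\max_{q\in Q}\left|q(D)-\sum_{x\in S}\mu'_x q(x)\right|$, where $\Delta(S)$ is the set of probability distributions on $S$. Rényi divergences: $\mathrm{D}_2(\mu\|\nu)=\log\sum_{x\in\mathcal{X}}\mu(x)^2/\nu(x)$ and $\mathrm{D}_\infty(\mu\|\nu)=\log\max_{x:\mu(x)>0}\mu(x)/\nu(x)$ (in general $\mathrm{D}_\alpha(\mu\|\nu)=\frac{1}{\alpha-1}\log\sum_x\mu(x)^\alpha\nu(x)^{1-\alpha}$). *)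

From HB Require Import structures.
From mathcomp Require Import all_boot all_order all_algebra.
From mathcomp Require Import all_classical all_reals all_analysis.
Set Implicit Arguments. Unset Strict Implicit. Unset Printing Implicit Defensive.
Import Order.TTheory GRing.Theory Num.Theory.
Local Open Scope ring_scope.

Section Defs.
Variables (R : realType) (X : finType).

Definition is_distr (mu : {ffun X -> R}) : Prop :=
  (forall x, 0 <= mu x) /\ \sum_(x : X) mu x = 1.

Definition is_query (q : {ffun X -> R}) : Prop := forall x, 0 <= q x <= 1.

Definition qD (k : nat) (q : {ffun X -> R}) (D : k.-tuple X) : R :=
  (k%:R)^-1 * \sum_(i < k) q (tnth D i).

Definition mixture_on (S : {set X}) (w : {ffun X -> R}) : Prop :=
  (forall x, 0 <= w x) /\ (forall x, x \notin S -> w x = 0) /\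
  \sum_(x in S) w x = 1.

Definition mix_err (k : nat) (D : k.-tuple X) (Q : seq {ffun X -> R})
  (S : {set X}) (w : {ffun X -> R}) : R :=
  \big[Num.max/0]_(q <- Q) `| qD q D - \sum_(x in S) w x * q x |.

(* f_{D,Q}(S) = min over mixtures of the max error (as an infimum in \bar R;
   equal to the minimum, which is attained, for nonempty S) *)
Definition fDQ (k : nat) (D : k.-tuple X) (Q : seq {ffun X -> R})
  (S : {set X}) : \bar R :=
  ereal_inf [set (mix_err D Q S w)%:E | w in mixture_on S].

Definition D2 (mu nu : {ffun X -> R}) : R :=
  ln (\sum_(x : X) mu x ^+ 2 / nu x).

Definition Dinf (mu nu : {ffun X -> R}) : R :=
  ln (\big[Num.max/0]_(x : X | 0 < mu x) (mu x / nu x)).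

(* D_inf(mu||nu) < oo : nu(x) > 0 whenever mu(x) > 0 *)
Definition Dinf_finite (mu nu : {ffun X -> R}) : Prop :=
  forall x, 0 < mu x -> 0 < nu x.

Definition supp (k : nat) (D : k.-tuple X) : {set X} := [set x | x \in D].

Definition prob_good (n m : nat) (mu nu : {ffun X -> R})
  (Q : seq {ffun X -> R}) (alpha : R) : R :=
  \sum_(p : n.-tuple X * m.-tuple X | (fDQ p.1 Q (supp p.2) <= alpha%:E)%E)
     ((\prod_(i < n) mu (tnth p.1 i)) * (\prod_(j < m) nu (tnth p.2 j))).

End Defs.

From HB Require Import structures.
From mathcomp Require Import all_boot all_order all_algebra.
From mathcomp Require Import all_classical all_reals all_analysis.
From mathcomp Require Import ring lra.
Set Implicit Arguments. Unset Strict Implicit. Unset Printing Implicit Defensive.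
Import Order.TTheory GRing.Theory Num.Theory.
Local Open Scope ring_scope.
Local Open Scope classical_set_scope.

(* Let c_q be the mu-mean of q.  Bernstein's inequality, derived from the
   moment-generating-function bound e^y <= 1 + y + y^2 / (2 (1 - y/3)), shows that
   with probability >= 1 - beta/2 the sample Dt ~ mu^n satisfies
   |q(Dt) - c_q| < alpha/2 for every q in Q.  On the sample Dh ~ nu^m, weight each
   point y by w(y) = mu(y)/nu(y): the self-normalised mixture
   sum_j w(y_j) delta_(y_j) / sum_j w(y_j) lives on the support of Dh, and Bernstein
   applied under nu to the centred variables w(y) (q(y) - c_q) and 1 - w(y), whose
   variances are at most e^(D_2) and whose ranges are at most e^(D_inf), shows that
   with probability >= 1 - beta/2 this mixture answers every q within alpha/2 of
   c_q.  A union bound over the 4|Q| + 1 events and the triangle inequality conclude;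
   when alpha >= 1 any point mass on the support of Dh already works. *)

Section BernsteinExp.
Variable R : realType.

Let pade (u : R) := (2 - u) * expR u - 2 - u.

Let is_derive_pade (x : R) : is_derive x 1 pade ((1 - x) * expR x - 1).
Proof.
have -> : pade = ((cst 2 - id) * expR - cst 2 - id)%R by apply/funext.
apply: is_derive_eq.
change ((2 - x) * expR x + expR x * (0 - 1) - 0 - 1 = (1 - x) * expR x - 1).
ring.
Qed.

(* [(1 - x) e^x <= 1] is [1 - x <= e^-x]. *)
Let pade_nincr (x : R) : pade^`() x <= 0.
Proof.
rewrite derive1E (@derive_val _ _ _ _ _ _ _ (is_derive_pade x)).
have := expR_ge1Dx (- x); rewrite expRN => le_expRN.
have : (1 - x) * expR x <= 1.
  by rewrite -[leRHS](mulVf (lt0r_neq0 (expR_gt0 x))) ler_pM2r ?expR_gt0.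
lra.
Qed.

Let pade_le0 (u : R) : 0 <= u -> pade u <= 0.
Proof.
move=> u_ge0; have : pade u <= pade 0.
  apply: (@ler0_derive1_nincry _ pade 0) => //.
  by apply: derivable_within_continuous => x _; exact: ex_derive.
by rewrite /pade expR0; lra.
Qed.

Let pade_ge0 (u : R) : u <= 0 -> 0 <= pade u.
Proof.
move=> u_le0; have : pade 0 <= pade u.
  apply: (@ler0_derive1_nincrNy _ pade 0) => //.
  by apply: derivable_within_continuous => x _; exact: ex_derive.
by rewrite /pade expR0; lra.
Qed.

Let gap (y : R) := y ^+ 2 / 2 - (expR y - 1 - y) * (1 - y / 3).

Let is_derive_gap (x : R) : is_derive x 1 gap (- pade x / 3).
Proof.
have -> : gap = (cst (2^-1) * (id * id) -
                 (expR - cst 1 - id) * (cst 1 - cst (3^-1) * id))%R.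
  by apply/funext => v; rewrite /gap /= expr2 !fctE /cst /=; ring.
apply: is_derive_eq.
by rewrite /pade !fctE /cst /= /GRing.scale /=; field.
Qed.

Lemma expR_remainder_le (y : R) : (expR y - 1 - y) * (1 - y / 3) <= y ^+ 2 / 2.
Proof.
suff : gap 0 <= gap y by rewrite /gap expR0; lra.
have [y_ge0|y_lt0] := leP 0 y.
  apply: (@ger0_derive1_ndecry _ gap 0) => //; last first.
    by apply: derivable_within_continuous => x _; exact: ex_derive.
  move=> x; rewrite in_itv /= andbT => x_gt0.
  rewrite derive1E (@derive_val _ _ _ _ _ _ _ (is_derive_gap x)).
  have := pade_le0 (ltW x_gt0); lra.
apply: (@ler0_derive1_nincrNy _ gap 0) => //; last exact: ltW.
- move=> x; rewrite in_itv /= => x_lt0.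
  rewrite derive1E (@derive_val _ _ _ _ _ _ _ (is_derive_gap x)).
  have := pade_ge0 (ltW x_lt0); lra.
- by apply: derivable_within_continuous => x _; exact: ex_derive.
Qed.

Lemma expR_le_quadratic (y b : R) : y <= b -> b < 3 ->
  expR y <= 1 + y + y ^+ 2 / (2 * (1 - b / 3)).
Proof.
move=> le_yb lt_b3.
have rem_ge0 : 0 <= expR y - 1 - y by have := expR_ge1Dx y; lra.
have c_gt0 : 0 < 1 - b / 3 by lra.
have : (expR y - 1 - y) * (1 - b / 3) <= y ^+ 2 / 2.
  apply: le_trans (expR_remainder_le y); apply: ler_wpM2l => //; lra.
rewrite -ler_pdivlMr // => le_rem.
have -> : y ^+ 2 / (2 * (1 - b / 3)) = y ^+ 2 / 2 / (1 - b / 3).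
  by rewrite invfM mulrA.
lra.
Qed.

End BernsteinExp.

Section FiniteSums.
Variables (R : numDomainType) (T : finType) (P : T -> R).
Hypothesis P_ge0 : forall p, 0 <= P p.

Lemma ler_sum_pred (A B : pred T) : (forall p, A p -> B p) ->
  \sum_(p | A p) P p <= \sum_(p | B p) P p.
Proof.
move=> AB; rewrite [leLHS]big_mkcond [leRHS]big_mkcond; apply: ler_sum => p _.
by case: ifP => [/AB -> //|_]; case: ifP.
Qed.

Lemma sum_predU_le (A B : pred T) :
  \sum_(p | A p || B p) P p <= \sum_(p | A p) P p + \sum_(p | B p) P p.
Proof.
rewrite [leLHS]big_mkcond [X in _ + X]big_mkcond [X in X + _]big_mkcond.
rewrite -big_split /=; apply: ler_sum => p _.
by case: (A p); case: (B p); rewrite ?addr0 ?add0r ?lerDl.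
Qed.

Lemma union_bound (I : Type) (r : seq I) (E : I -> pred T) :
  \sum_(p | has (E^~ p) r) P p <= \sum_(i <- r) \sum_(p | E i p) P p.
Proof.
elim: r => [|i r IH]; first by rewrite big_nil big_pred0.
by rewrite big_cons; apply: le_trans (sum_predU_le _ _) _; rewrite lerD2l.
Qed.

End FiniteSums.

Lemma sum_pair_mul (R : pzSemiRingType) (T1 T2 : finType) (A : pred T1) (B : pred T2)
    (F : T1 -> R) (G : T2 -> R) :
  \sum_(p : T1 * T2 | A p.1 && B p.2) F p.1 * G p.2
  = (\sum_(x | A x) F x) * (\sum_(y | B y) G y).
Proof. by rewrite big_distrlr pair_big_dep. Qed.

Section Bernstein.
Variables (R : realType) (X : finType).

Definition tuple_prob (k : nat) (p : X -> R) (s : k.-tuple X) : R :=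
  \prod_(i < k) p (tnth s i).

Lemma sum_tuple_prob k (p : X -> R) :
  \sum_(s : k.-tuple X) tuple_prob p s = (\sum_x p x) ^+ k.
Proof.
rewrite /tuple_prob.
rewrite (reindex (fun f : {ffun 'I_k -> X} => [tuple f i | i < k])) /=; last first.
  apply: onW_bij; exists (fun s : k.-tuple X => [ffun i => tnth s i]).
    by move=> f; apply/ffunP => i; rewrite ffunE tnth_mktuple.
  by move=> s; apply: eq_from_tnth => i; rewrite tnth_mktuple ffunE.
under eq_bigr => f _ do under eq_bigr => i _ do rewrite tnth_mktuple.
by rewrite -(bigA_distr_bigA (fun _ x => p x)) prodr_const card_ord.
Qed.

Variables (p f : X -> R).
Hypotheses (p_ge0 : forall x, 0 <= p x) (p_sum1 : \sum_x p x = 1).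

Lemma tuple_prob_ge0 k (s : k.-tuple X) : 0 <= tuple_prob p s.
Proof. by apply: prodr_ge0 => i _; exact: p_ge0. Qed.

Lemma chernoff_tuple k (t lam : R) : 0 <= lam ->
  \sum_(s : k.-tuple X | k%:R * t <= \sum_(x <- s) f x) tuple_prob p s
  <= expR (- (lam * (k%:R * t))) * (\sum_x p x * expR (lam * f x)) ^+ k.
Proof.
move=> lam_ge0.
rewrite -sum_tuple_prob mulr_sumr big_mkcond /=; apply: ler_sum => s _.
have -> : expR (- (lam * (k%:R * t))) * tuple_prob (fun x => p x * expR (lam * f x)) s
    = tuple_prob p s * expR (lam * (\sum_(x <- s) f x - k%:R * t)).
  rewrite /tuple_prob big_split /= mulrBr expRD mulr_sumr expR_sum big_tuple /=.
  by rewrite mulrC -mulrA.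
case: ifP => [le_ts|_]; last by rewrite mulr_ge0 ?tuple_prob_ge0 ?expR_ge0.
rewrite -[leLHS]mulr1 ler_wpM2l ?tuple_prob_ge0 //.
have : 0 <= lam * (\sum_(x <- s) f x - k%:R * t) by rewrite mulr_ge0 ?subr_ge0.
have := expR_ge1Dx (lam * (\sum_(x <- s) f x - k%:R * t)); lra.
Qed.

Variables (v b : R).
Hypotheses (f_le : forall x, f x <= b) (f_mean0 : \sum_x p x * f x = 0)
  (f_var : \sum_x p x * f x ^+ 2 <= v).

Lemma bernstein_mgf (lam : R) : 0 <= lam -> lam * b < 3 -> 0 <= v ->
  \sum_x p x * expR (lam * f x) <= expR (lam ^+ 2 * v / (2 * (1 - lam * b / 3))).
Proof.
move=> lam_ge0 lam_b v_ge0.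
set c := 2 * (1 - lam * b / 3).
have c_gt0 : 0 < c by rewrite /c; lra.
apply: (@le_trans _ _ (\sum_x p x * (1 + lam * f x + (lam * f x) ^+ 2 / c))).
  apply: ler_sum => x _; apply: ler_wpM2l => //; apply: expR_le_quadratic => //.
  exact: ler_wpM2l.
have -> : \sum_x p x * (1 + lam * f x + (lam * f x) ^+ 2 / c)
    = \sum_x p x + lam * \sum_x p x * f x + lam ^+ 2 / c * \sum_x p x * f x ^+ 2.
  by rewrite !mulr_sumr -!big_split /=; apply: eq_bigr => x _; ring.
rewrite p_sum1 f_mean0 mulr0 addr0.
apply: le_trans (expR_ge1Dx _); rewrite lerD2l mulrAC ler_wpM2r ?invr_ge0 ?(ltW c_gt0) //.
by rewrite ler_wpM2l ?sqr_ge0.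
Qed.

Lemma bernstein_tail k (t : R) : 0 < v -> 0 <= b -> 0 < t ->
  \sum_(s : k.-tuple X | k%:R * t <= \sum_(x <- s) f x) tuple_prob p s
  <= expR (- (k%:R * t ^+ 2 / (2 * (v + b * t / 3)))).
Proof.
move=> v_gt0 b_ge0 t_gt0.
set D := v + b * t / 3.
have D_gt0 : 0 < D by rewrite /D; have := mulr_ge0 b_ge0 (ltW t_gt0); lra.
have lam_b : t / D * b < 3.
  rewrite mulrAC ltr_pdivrMr //; rewrite /D; lra.
apply: le_trans (chernoff_tuple _ _ (divr_ge0 (ltW t_gt0) (ltW D_gt0))) _.
have mgf_ge0 : 0 <= \sum_x p x * expR (t / D * f x).
  by apply: sumr_ge0 => x _; rewrite mulr_ge0 ?expR_ge0.
have mgf := bernstein_mgf (divr_ge0 (ltW t_gt0) (ltW D_gt0)) lam_b (ltW v_gt0).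
apply: le_trans.
  apply: ler_wpM2l; first exact: expR_ge0.
  by apply: lerXn2r mgf; rewrite nnegrE ?expR_ge0.
rewrite -expRM_natl -expRD ler_expR le_eqVlt; apply/orP; left; apply/eqP.
have bt_ge0 := mulr_ge0 b_ge0 (ltW t_gt0).
by rewrite /D; field; rewrite !lt0r_neq0 //; lra.
Qed.

End Bernstein.

Lemma bernstein_tail_norm (R : realType) (X : finType) (p f : X -> R) (k : nat)
    (v b t : R) :
  (forall x, 0 <= p x) -> \sum_x p x = 1 ->
  (forall x, `|f x| <= b) -> \sum_x p x * f x = 0 -> \sum_x p x * f x ^+ 2 <= v ->
  0 < v -> 0 <= b -> 0 < t ->
  \sum_(s : k.-tuple X | k%:R * t <= `|\sum_(x <- s) f x|) tuple_prob p s
  <= 2 * expR (- (k%:R * t ^+ 2 / (2 * (v + b * t / 3)))).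
Proof.
move=> p_ge0 p_sum1 f_le f_mean0 f_var v_gt0 b_ge0 t_gt0.
under eq_bigl do rewrite ler_normr -sumrN.
apply: le_trans (sum_predU_le (fun s => tuple_prob_ge0 p_ge0 s)
  (fun s : k.-tuple X => k%:R * t <= \sum_(x <- s) f x)
  (fun s : k.-tuple X => k%:R * t <= \sum_(x <- s) - f x)) _.
set e := expR _; rewrite (mulr_natl e 2) mulr2n; apply: lerD.
  by apply: bernstein_tail => // x; have := f_le x; rewrite ler_norml => /andP[].
apply: bernstein_tail => //.
- by move=> x; have := f_le x; rewrite ler_norml lerNl => /andP[].
- by under eq_bigr do rewrite mulrN; rewrite sumrN f_mean0 oppr0.
- by under eq_bigr do rewrite sqrrN.
Qed.

Lemma qD_in01 (R : realType) (X : finType) k (q : {ffun X -> R}) (D : k.-tuple X) :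
  is_query q -> 0 <= qD q D <= 1.
Proof.
move=> q01; rewrite /qD.
have sum_ge0 : 0 <= \sum_(i < k) q (tnth D i).
  by apply: sumr_ge0 => i _; case/andP: (q01 (tnth D i)).
have sum_lek : \sum_(i < k) q (tnth D i) <= k%:R.
  rewrite -[k in k%:R]card_ord -sumr_const; apply: ler_sum => i _.
  by case/andP: (q01 (tnth D i)).
case: k D sum_ge0 sum_lek => [|k] D sum_ge0 sum_lek.
  by rewrite invr0 mul0r lexx ler01.
by rewrite mulr_ge0 ?invr_ge0 ?ler0n //= mulrC ler_pdivrMr ?mul1r ?ltr0n.
Qed.

Section Mixtures.
Variables (R : realType) (X : finType) (k : nat) (D : k.-tuple X).
Variables (Q : seq {ffun X -> R}) (S : {set X}).

Lemma fDQ_le_mixture (w : {ffun X -> R}) (alpha : R) : 0 <= alpha -> mixture_on S w ->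
  (forall q, q \in Q -> `|qD q D - \sum_(x in S) w x * q x| <= alpha) ->
  (fDQ D Q S <= alpha%:E)%E.
Proof.
move=> alpha_ge0 w_mix w_err.
apply: (@le_trans _ _ (mix_err D Q S w)%:E); first by apply: ereal_inf_lbound; exists w.
by rewrite lee_fin /mix_err big_seq; apply: bigmax_le.
Qed.

Lemma fDQ_le1 (x0 : X) : x0 \in S -> (forall q, q \in Q -> is_query q) ->
  (fDQ D Q S <= 1%:E)%E.
Proof.
move=> x0S Q01; pose w := [ffun x => (x == x0)%:R : R].
have sum_w (g : X -> R) : \sum_(x in S) w x * g x = g x0.
  rewrite (bigD1 x0) //= big1 => [|x /andP[_ /negbTE x_x0]].
    by rewrite /w ffunE eqxx mul1r addr0.
  by rewrite /w ffunE x_x0 mul0r.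
apply: (fDQ_le_mixture (w := w)) => //.
  split; first by move=> x; rewrite ffunE ler0n.
  split; last by have := sum_w (fun _ => 1); under eq_bigr do rewrite mulr1.
  by move=> x x_notin; rewrite ffunE; case: eqP x_notin => // ->; rewrite x0S.
move=> q /Q01 q01; rewrite sum_w.
have /andP[qD_ge0 qD_le1] := qD_in01 D q01.
have /andP[qx0_ge0 qx0_le1] := q01 x0.
by rewrite ler_norml; apply/andP; split; lra.
Qed.

End Mixtures.

Lemma sum_supp (R : nmodType) (X : finType) k (t : k.-tuple X) (F : X -> R) :
  (forall x, x \notin t -> F x = 0) -> \sum_(x in supp t) F x = \sum_x F x.
Proof.
move=> F0; rewrite [RHS](bigID (mem (supp t))) /= [X in _ = _ + X]big1 ?addr0 // => x.
by rewrite inE => /F0.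
Qed.

Lemma qD_near (R : realType) (X : finType) k (q : {ffun X -> R}) (D : k.-tuple X)
    (c e : R) :
  `|\sum_(x <- D) (q x - c)| < k%:R * e -> `|qD q D - c| < e.
Proof.
move=> near_c.
have ke_gt0 : 0 < k%:R * e := le_lt_trans (normr_ge0 _) near_c.
have k_gt0 : 0 < k%:R :> R.
  by rewrite ltr0n lt0n; apply: contraTneq ke_gt0 => ->; rewrite mul0r ltxx.
have -> : qD q D - c = (\sum_(x <- D) (q x - c)) / k%:R.
  rewrite /qD sumrB big_tuple /= big_const_seq count_predT size_tuple iter_addr_0.
  by rewrite -mulr_natr; field; rewrite lt0r_neq0.
by rewrite normrM normfV (ger0_norm (ltW k_gt0)) ltr_pdivrMr // mulrC.
Qed.

Section ImportanceWeights.
Variables (R : realType) (X : finType) (mu nu : {ffun X -> R}).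
Hypotheses (mu_distr : is_distr mu) (nu_distr : is_distr nu) (mu_nu : Dinf_finite mu nu).

Definition mean (g : X -> R) : R := \sum_x mu x * g x.
(* Where [nu x = 0] this is [0] (division by zero); [mu x = 0] there too by
   [Dinf_finite]. *)
Definition iweight (x : X) : R := mu x / nu x.
Definition iweight_max : R := \big[Num.max/0]_(x | 0 < mu x) (mu x / nu x).
Definition iweight_sqsum : R := \sum_x mu x ^+ 2 / nu x.

Let mu_ge0 x : 0 <= mu x. Proof. exact: mu_distr.1. Qed.
Let nu_ge0 x : 0 <= nu x. Proof. exact: nu_distr.1. Qed.

Lemma nu_iweight x : nu x * iweight x = mu x.
Proof.
have [nu0|nu_neq0] := eqVneq (nu x) 0; last by rewrite /iweight mulrC divfK.
rewrite nu0 mul0r; apply/esym/eqP; rewrite eq_le mu_ge0 andbT leNgt.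
by apply/negP => /mu_nu; rewrite nu0 ltxx.
Qed.

Lemma nu_iweight_sqr x : nu x * iweight x ^+ 2 = mu x ^+ 2 / nu x.
Proof.
have [nu0|nu_neq0] := eqVneq (nu x) 0; first by rewrite nu0 mul0r invr0 mulr0.
by rewrite /iweight; field.
Qed.

Lemma iweight_ge0 x : 0 <= iweight x.
Proof. exact: divr_ge0. Qed.

Let exists_mu_gt0 : exists x, 0 < mu x.
Proof.
apply/existsP; apply: contraT => /existsPn mu_le0.
have := mu_distr.2; rewrite big1 => [/eqP|x _]; first by rewrite eq_sym oner_eq0.
by apply/eqP; rewrite eq_le mu_ge0 andbT leNgt mu_le0.
Qed.

Lemma iweight_le_max x : iweight x <= iweight_max.
Proof.
have [mux_gt0|mux_le0] := ltP 0 (mu x); first exact: le_bigmax_cond.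
have -> : iweight x = 0.
  by rewrite /iweight (@le_anti _ _ (mu x) 0) ?mux_le0 ?mu_ge0 ?mul0r.
have [x0 mux0_gt0] := exists_mu_gt0.
exact: le_trans (iweight_ge0 x0) (le_bigmax_cond _ _ mux0_gt0).
Qed.

Lemma iweight_max_ge1 : 1 <= iweight_max.
Proof.
rewrite -mu_distr.2 -[leRHS]mul1r -nu_distr.2 mulr_suml; apply: ler_sum => x _.
by rewrite -nu_iweight ler_wpM2l ?iweight_le_max.
Qed.

Lemma expR_Dinf : expR (Dinf mu nu) = iweight_max.
Proof. by rewrite /Dinf lnK // posrE; apply: lt_le_trans iweight_max_ge1. Qed.

Lemma iweight_sqsum_gt0 : 0 < iweight_sqsum.
Proof.
have [x0 mux0_gt0] := exists_mu_gt0.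
rewrite /iweight_sqsum (bigD1 x0) //= ltr_pwDl ?divr_gt0 ?exprn_gt0 ?mu_nu //.
by apply: sumr_ge0 => x _; rewrite divr_ge0 ?sqr_ge0.
Qed.

Lemma expR_D2 : expR (D2 mu nu) = iweight_sqsum.
Proof. by rewrite /D2 lnK // posrE; exact: iweight_sqsum_gt0. Qed.

Lemma mean_centered (g : X -> R) : \sum_x mu x * (g x - mean g) = 0.
Proof.
under eq_bigr do rewrite mulrBr.
by rewrite sumrB -mulr_suml mu_distr.2 mul1r subrr.
Qed.

Lemma mean_query_in01 q : is_query q -> 0 <= mean q <= 1.
Proof.
move=> q01; rewrite -mu_distr.2; apply/andP; split.
  by apply: sumr_ge0 => x _; rewrite mulr_ge0 //; case/andP: (q01 x).
by apply: ler_sum => x _; rewrite ler_piMr //; case/andP: (q01 x).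
Qed.

Lemma query_dev_le1 q x : is_query q -> `|q x - mean q| <= 1.
Proof.
move=> q01; have /andP[m0 m1] := mean_query_in01 q01; have /andP[q0 q1] := q01 x.
by rewrite ler_norml; apply/andP; split; lra.
Qed.

(* Popoviciu: E (q - E q)^2 = E q^2 - (E q)^2 <= E q - (E q)^2 <= 1/4. *)
Lemma var_query_le q : is_query q -> \sum_x mu x * (q x - mean q) ^+ 2 <= 1 / 4.
Proof.
move=> q01.
have -> : \sum_x mu x * (q x - mean q) ^+ 2 = \sum_x mu x * q x ^+ 2 - mean q ^+ 2.
  have E x : mu x * (q x - mean q) ^+ 2
      = mu x * q x ^+ 2 - 2 * mean q * (mu x * q x) + mean q ^+ 2 * mu x by ring.
  rewrite (eq_bigr _ (fun x _ => E x)) !big_split /= sumrN -!mulr_sumr.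
  rewrite mu_distr.2 -/(mean q); ring.
have : \sum_x mu x * q x ^+ 2 <= mean q.
  apply: ler_sum => x _; apply: ler_wpM2l => //.
  by case/andP: (q01 x) => qx_ge0 qx_le1; rewrite expr2 ler_piMl.
have := sqr_ge0 (mean q - 1 / 2); lra.
Qed.

Lemma query_tail_mu k q (t : R) : is_query q -> 0 < t ->
  \sum_(s : k.-tuple X | k%:R * t <= `|\sum_(x <- s) (q x - mean q)|) tuple_prob mu s
  <= 2 * expR (- (k%:R * t ^+ 2 / (2 * (1 / 4 + 1 * t / 3)))).
Proof.
move=> q01 t_gt0; apply: bernstein_tail_norm => //.
- exact: mu_distr.2.
- by move=> x; exact: query_dev_le1.
- exact: mean_centered.
- exact: var_query_le.
Qed.

Lemma query_tail_nu k q (t : R) : is_query q -> 0 < t ->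
  \sum_(s : k.-tuple X | k%:R * t <= `|\sum_(x <- s) iweight x * (q x - mean q)|)
    tuple_prob nu s
  <= 2 * expR (- (k%:R * t ^+ 2 / (2 * (iweight_sqsum + iweight_max * t / 3)))).
Proof.
move=> q01 t_gt0; have dev_le1 x := query_dev_le1 x q01.
apply: bernstein_tail_norm => //.
- exact: nu_distr.2.
- move=> x; rewrite normrM ger0_norm ?iweight_ge0 //.
  by apply: le_trans (iweight_le_max x); rewrite ler_piMr ?iweight_ge0.
- by under eq_bigr do rewrite mulrA nu_iweight; exact: mean_centered.
- rewrite /iweight_sqsum; apply: ler_sum => x _.
  rewrite exprMn mulrA nu_iweight_sqr ler_piMr ?divr_ge0 ?sqr_ge0 //.
  by rewrite -real_normK ?num_real // expr_le1.
- exact: iweight_sqsum_gt0.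
- exact: le_trans iweight_max_ge1.
Qed.

Lemma iweight_tail k (t : R) : 0 < t ->
  \sum_(s : k.-tuple X | k%:R * t <= \sum_(x <- s) (1 - iweight x)) tuple_prob nu s
  <= expR (- (k%:R * t ^+ 2 / (2 * (iweight_sqsum + iweight_max * t / 3)))).
Proof.
move=> t_gt0; apply: bernstein_tail => //.
- exact: nu_distr.2.
- by move=> x; apply: le_trans iweight_max_ge1; rewrite gerBl iweight_ge0.
- under eq_bigr do rewrite mulrBr mulr1 nu_iweight.
  by rewrite sumrB mu_distr.2 nu_distr.2 subrr.
- have E x : nu x * (1 - iweight x) ^+ 2 = nu x - 2 * mu x + mu x ^+ 2 / nu x.
    by rewrite -nu_iweight_sqr -nu_iweight; ring.
  rewrite (eq_bigr _ (fun x _ => E x)) !big_split /= sumrN -mulr_sumr.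
  rewrite mu_distr.2 nu_distr.2 /iweight_sqsum; lra.
- exact: iweight_sqsum_gt0.
- exact: le_trans iweight_max_ge1.
Qed.

Definition iw_mixture (t : seq X) : {ffun X -> R} :=
  [ffun x => (\sum_(y <- t | y == x) iweight y) / \sum_(y <- t) iweight y].

Lemma sum_iw_mixture k (t : k.-tuple X) (g : X -> R) :
  \sum_(x in supp t) iw_mixture t x * g x
  = (\sum_(y <- t) iweight y * g y) / \sum_(y <- t) iweight y.
Proof.
rewrite sum_supp => [|x x_notin]; last first.
  by rewrite ffunE big_hasC ?has_pred1 // !mul0r.
rewrite [in X in _ = X / _](partition_big id predT) //= mulr_suml.
apply: eq_bigr => x _.
rewrite ffunE mulrAC big_distrl; congr (_ / _); apply: eq_bigr => y /eqP -> //.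
Qed.

Lemma iw_mixture_on k (t : k.-tuple X) :
  0 < \sum_(y <- t) iweight y -> mixture_on (supp t) (iw_mixture t).
Proof.
move=> Z_gt0; split; [|split].
- move=> x; rewrite ffunE divr_ge0 ?(ltW Z_gt0) //.
  by apply: sumr_ge0 => y _; exact: iweight_ge0.
- by move=> x; rewrite inE => x_notin; rewrite ffunE big_hasC ?has_pred1 ?mul0r.
- have := sum_iw_mixture t (fun _ => 1).
  under eq_bigr do rewrite mulr1; move=> ->.
  by under eq_bigr do rewrite mulr1; rewrite divff ?gt_eqF.
Qed.

Lemma fDQ_le_concentrated n m (s : n.-tuple X) (t : m.-tuple X)
    (Q : seq {ffun X -> R}) (alpha : R) :
  0 < alpha <= 2 ->
  (forall q, q \in Q -> `|\sum_(x <- s) (q x - mean q)| < n%:R * (alpha / 2)) ->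
  (forall q, q \in Q ->
     `|\sum_(y <- t) iweight y * (q y - mean q)| < m%:R * (alpha / 4)) ->
  \sum_(y <- t) (1 - iweight y) < m%:R * (alpha / 4) ->
  (fDQ s Q (supp t) <= alpha%:E)%E.
Proof.
move=> /andP[alpha_gt0 alpha_le2] dev_s dev_t low_Z.
set Z := \sum_(y <- t) iweight y.
have Z_lower : m%:R * (1 - alpha / 4) < Z.
  by move: low_Z; rewrite sumrB big_const_seq count_predT size_tuple iter_addr_0 -/Z; lra.
have m_ge0 : 0 <= m%:R :> R := ler0n _ _.
have Z_gt0 : 0 < Z by apply: le_lt_trans Z_lower; rewrite mulr_ge0 //; lra.
have Z_large : m%:R * (alpha / 4) <= alpha / 2 * Z.
  have := ler_wpM2l (ltW (divr_gt0 alpha_gt0 (ltr0n R 2))) (ltW Z_lower).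
  have : 0 <= m%:R * (alpha / 4) * (1 - alpha / 2).
    by rewrite !mulr_ge0 //; lra.
  lra.
apply: (fDQ_le_mixture (w := iw_mixture t)); [exact: ltW | exact: iw_mixture_on |].
move=> q qQ; rewrite sum_iw_mixture -/Z.
have est_s : `|qD q s - mean q| < alpha / 2 := qD_near (dev_s q qQ).
have est_t : `|mean q - (\sum_(y <- t) iweight y * q y) / Z| <= alpha / 2.
  have -> : mean q - (\sum_(y <- t) iweight y * q y) / Z
      = - (\sum_(y <- t) iweight y * (q y - mean q)) / Z.
    under [in RHS]eq_bigr do rewrite mulrBr.
    by rewrite sumrB -mulr_suml -/Z; field; rewrite gt_eqF.
  rewrite normrM normrN normfV (gtr0_norm Z_gt0) ler_pdivrMr //.
  exact: ltW (lt_le_trans (dev_t q qQ) Z_large).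
have := ler_normD (qD q s - mean q) (mean q - (\sum_(y <- t) iweight y * q y) / Z).
rewrite addrA subrK; lra.
Qed.

End ImportanceWeights.

Lemma ler_sum_seq_const (R : numDomainType) (I : eqType) (r : seq I) (F : I -> R)
    (c : R) :
  (forall i, i \in r -> F i <= c) -> \sum_(i <- r) F i <= (size r)%:R * c.
Proof.
move=> F_le; rewrite big_seq; apply: le_trans (ler_sum _ F_le) _.
by rewrite -big_seq big_const_seq count_predT iter_addr_0 mulr_natl.
Qed.

Lemma bernstein_exponent_le (R : realType) (k v b t L : R) :
  0 < t -> 0 < v + b * t / 3 ->
  2 * (v + b * t / 3) / t ^+ 2 * L <= k ->
  expR (- (k * t ^+ 2 / (2 * (v + b * t / 3)))) <= expR (- L).
Proof.
move=> t_gt0 D_gt0; rewrite ler_expR lerN2 mulrAC ler_pdivrMr ?exprn_gt0 // => le_k.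
by rewrite ler_pdivlMr ?mulr_gt0 // mulrC.
Qed.

Lemma expRN_ln (R : realType) (y : R) : 0 < y -> expR (- ln y) = y^-1.
Proof. by move=> y_gt0; rewrite expRN lnK. Qed.

Lemma sample_size_mu (R : realType) (n N : nat) (alpha beta : R) :
  0 < alpha < 1 -> 0 < beta < 1 -> 8 / alpha ^+ 2 * ln (4 * N%:R / beta) <= n%:R ->
  2 * N%:R * expR (- (n%:R * (alpha / 2) ^+ 2 / (2 * (1 / 4 + 1 * (alpha / 2) / 3))))
  <= beta / 2.
Proof.
move=> /andP[alpha_gt0 alpha_lt1] /andP[beta_gt0 beta_lt1] n_large.
have [->|N_gt0] := posnP N; first by rewrite mulr0 mul0r divr_ge0 ?ltW.
have N_ge1 : 1 <= N%:R :> R by rewrite ler1n.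
have y_gt0 : 0 < 4 * N%:R / beta by rewrite divr_gt0 //; lra.
have L_ge0 : 0 <= ln (4 * N%:R / beta).
  by rewrite ln_ge0 // ler_pdivlMr // mul1r; lra.
set delta := expR _.
have delta_le : delta <= beta / (4 * N%:R).
  rewrite -[beta / _]invf_div -(expRN_ln y_gt0).
  apply: (@bernstein_exponent_le _ n%:R (1 / 4) 1 (alpha / 2)); [lra | lra |].
  apply: le_trans n_large; rewrite ler_wpM2r //.
  have -> : 2 * (1 / 4 + 1 * (alpha / 2) / 3) / (alpha / 2) ^+ 2
      = (2 + 4 * alpha / 3) / alpha ^+ 2 by field; rewrite gt_eqF.
  by rewrite ler_pM2r ?invr_gt0 ?exprn_gt0 //; lra.
have -> : beta / 2 = 2 * N%:R * (beta / (4 * N%:R)) by field; rewrite gt_eqF //; lra.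
by rewrite ler_wpM2l // mulr_ge0 ?ler0n.
Qed.

Lemma sample_size_nu (R : realType) (m N : nat) (alpha beta S M : R) :
  0 < alpha -> 0 < beta < 1 -> 0 < S -> 0 < M ->
  (32 / alpha ^+ 2 * S + 8 / (3 * alpha) * M) * ln ((4 * N%:R + 4) / beta) <= m%:R ->
  (2 * N%:R + 1) * expR (- (m%:R * (alpha / 4) ^+ 2 / (2 * (S + M * (alpha / 4) / 3))))
  <= beta / 2.
Proof.
move=> alpha_gt0 /andP[beta_gt0 beta_lt1] S_gt0 M_gt0 m_large.
set delta := expR _.
have N_ge0 : 0 <= N%:R :> R := ler0n _ _.
have y_gt0 : 0 < (4 * N%:R + 4) / beta by rewrite divr_gt0 //; lra.
have delta_le : delta <= beta / (4 * N%:R + 4).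
  rewrite -[beta / _]invf_div -(expRN_ln y_gt0).
  have Malpha_gt0 := mulr_gt0 M_gt0 alpha_gt0.
  apply: (@bernstein_exponent_le _ m%:R S M (alpha / 4)); [lra | lra |].
  apply: le_trans m_large; rewrite le_eqVlt; apply/orP; left; apply/eqP.
  by congr (_ * _); field; rewrite gt_eqF.
apply: le_trans (ler_wpM2l _ delta_le) _; first lra.
rewrite mulrA ler_pdivrMr; last lra.
have := mulr_ge0 N_ge0 (ltW beta_gt0); lra.
Qed.

Section SampleSpace.
Variables (R : realType) (X : finType) (mu nu : {ffun X -> R}) (n m : nat).
Hypotheses (mu_distr : is_distr mu) (nu_distr : is_distr nu).

Definition pair_prob (p : n.-tuple X * m.-tuple X) : R :=
  tuple_prob mu p.1 * tuple_prob nu p.2.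

Lemma pair_prob_ge0 p : 0 <= pair_prob p.
Proof.
by rewrite mulr_ge0 // tuple_prob_ge0 //; [exact: mu_distr.1 | exact: nu_distr.1].
Qed.

Lemma sum_pair_prob_fst (A : pred (n.-tuple X)) :
  \sum_(p | A p.1) pair_prob p = \sum_(s | A s) tuple_prob mu s.
Proof.
rewrite -[RHS]mulr1 -(expr1n _ m) -nu_distr.2 -sum_tuple_prob -sum_pair_mul.
by apply: eq_bigl => p; rewrite andbT.
Qed.

Lemma sum_pair_prob_snd (B : pred (m.-tuple X)) :
  \sum_(p | B p.2) pair_prob p = \sum_(t | B t) tuple_prob nu t.
Proof.
rewrite -[RHS]mul1r -(expr1n _ n) -mu_distr.2 -sum_tuple_prob -sum_pair_mul.
by apply: eq_bigl.
Qed.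

Lemma sum_pair_prob_all : \sum_p pair_prob p = 1.
Proof. by rewrite (sum_pair_prob_fst predT) sum_tuple_prob mu_distr.2 expr1n. Qed.

Lemma sum_pair_prob_le1 (E : pred (n.-tuple X * m.-tuple X)) :
  \sum_(p | E p) pair_prob p <= 1.
Proof.
by rewrite -sum_pair_prob_all; apply: (ler_sum_pred pair_prob_ge0 (B := xpredT)).
Qed.

Lemma prob_good_ge Q (alpha beta : R) :
  \sum_(p | ~~ (fDQ p.1 Q (supp p.2) <= alpha%:E)%E) pair_prob p <= beta ->
  1 - beta <= prob_good n m mu nu Q alpha.
Proof.
have := sum_pair_prob_all.
rewrite (bigID (fun p => fDQ p.1 Q (supp p.2) <= alpha%:E)%E) /prob_good /=; lra.
Qed.

Lemma prob_bad_le (mu_nu : Dinf_finite mu nu) (Q : seq {ffun X -> R}) (alpha : R) :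
  (forall q, q \in Q -> is_query q) -> 0 < alpha < 1 ->
  \sum_(p | ~~ (fDQ p.1 Q (supp p.2) <= alpha%:E)%E) pair_prob p
  <= 2 * (size Q)%:R *
       expR (- (n%:R * (alpha / 2) ^+ 2 / (2 * (1 / 4 + 1 * (alpha / 2) / 3))))
   + (2 * (size Q)%:R + 1) *
       expR (- (m%:R * (alpha / 4) ^+ 2 /
               (2 * (iweight_sqsum mu nu + iweight_max mu nu * (alpha / 4) / 3)))).
Proof.
move=> Q01 /andP[alpha_gt0 alpha_lt1].
pose dev_s (q : {ffun X -> R}) (s : n.-tuple X) :=
  n%:R * (alpha / 2) <= `|\sum_(x <- s) (q x - mean mu q)|.
pose dev_t (q : {ffun X -> R}) (t : m.-tuple X) :=
  m%:R * (alpha / 4) <= `|\sum_(y <- t) iweight mu nu y * (q y - mean mu q)|.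
pose low_Z (t : m.-tuple X) :=
  m%:R * (alpha / 4) <= \sum_(y <- t) (1 - iweight mu nu y).
have bad_dev p : ~~ (fDQ p.1 Q (supp p.2) <= alpha%:E)%E ->
    has (dev_s^~ p.1) Q || (has (dev_t^~ p.2) Q || low_Z p.2).
  apply: contraR => /norP[/hasPn dev_s_no /norP[/hasPn dev_t_no low_Z_no]].
  apply: (fDQ_le_concentrated mu_distr nu_distr); first by rewrite alpha_gt0; lra.
  - by move=> q /dev_s_no; rewrite ltNge.
  - by move=> q /dev_t_no; rewrite ltNge.
  - by rewrite ltNge.
apply: le_trans (ler_sum_pred pair_prob_ge0 bad_dev) _.
apply: le_trans (sum_predU_le pair_prob_ge0 _ _) _; apply: lerD.
  rewrite (sum_pair_prob_fst (fun s => has (dev_s^~ s) Q)).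
  apply: le_trans (union_bound (fun s => tuple_prob_ge0 mu_distr.1 s) _ _) _.
  rewrite -mulrA mulrCA; apply: ler_sum_seq_const => q /Q01 q01.
  by apply: query_tail_mu => //; lra.
rewrite (sum_pair_prob_snd (fun t => has (dev_t^~ t) Q || low_Z t)).
apply: le_trans (sum_predU_le (fun t => tuple_prob_ge0 nu_distr.1 t) _ _) _.
rewrite mulrDl mul1r; apply: lerD; last by apply: iweight_tail => //; lra.
apply: le_trans (union_bound (fun t => tuple_prob_ge0 nu_distr.1 t) _ _) _.
rewrite -mulrA mulrCA; apply: ler_sum_seq_const => q /Q01 q01.
by apply: query_tail_nu => //; lra.
Qed.

End SampleSpace.

Theorem mainTheorem2 (R : realType) (X : finType) (mu nu : {ffun X -> R})
  (n m : nat) (Q : seq {ffun X -> R}) (alpha beta : R) :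
  is_distr mu -> is_distr nu -> Dinf_finite mu nu ->
  uniq Q -> (forall q, q \in Q -> is_query q) ->
  0 < alpha -> 0 < beta ->
  n%:R >= 8 / alpha ^+ 2 * ln (4 * (size Q)%:R / beta) ->
  m%:R >= (32 / alpha ^+ 2 * expR (D2 mu nu) + 8 / (3 * alpha) * expR (Dinf mu nu))
          * ln ((4 * (size Q)%:R + 4) / beta) ->
  prob_good n m mu nu Q alpha >= 1 - beta.
Proof.
move=> mu_distr nu_distr mu_nu _ Q01 alpha_gt0 beta_gt0 n_large m_large.
apply: (prob_good_ge mu_distr nu_distr).
have [beta_ge1|beta_lt1] := leP 1 beta.
  exact: le_trans (sum_pair_prob_le1 mu_distr nu_distr _) beta_ge1.
rewrite expR_D2 // expR_Dinf // in m_large.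
have S_gt0 := iweight_sqsum_gt0 mu_distr nu_distr mu_nu.
have M_gt0 := lt_le_trans ltr01 (iweight_max_ge1 mu_distr nu_distr mu_nu).
have [alpha_ge1|alpha_lt1] := leP 1 alpha.
  have m_gt0 : (0 < m)%N.
    rewrite -(ltr0n R); apply: lt_le_trans m_large; rewrite mulr_gt0 //.
      by rewrite addr_gt0 // mulr_gt0 // divr_gt0 // ?exprn_gt0 ?mulr_gt0.
    by rewrite ln_gt0 // ltr_pdivlMr // mul1r; have := ler0n R (size Q); lra.
  rewrite big_pred0 ?(ltW beta_gt0) // => p; apply/negbTE; rewrite negbK.
  have t0_supp : tnth p.2 (Ordinal m_gt0) \in supp p.2 by rewrite inE mem_tnth.
  by apply: le_trans (fDQ_le1 _ t0_supp Q01) _; rewrite lee_fin.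
have alpha01 : 0 < alpha < 1 by rewrite alpha_gt0 alpha_lt1.
have beta01 : 0 < beta < 1 by rewrite beta_gt0 beta_lt1.
apply: le_trans (prob_bad_le n m mu_distr nu_distr mu_nu Q01 alpha01) _.
have := sample_size_mu alpha01 beta01 n_large.
have := sample_size_nu alpha_gt0 beta01 S_gt0 M_gt0 m_large.
lra.
Qed.
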